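(* Let $E$ be a pseudo effect algebra satisfying (RDP). Then: (a) $(\mathcal J(E),\le^+)$ is an Abelian Dedekind complete $\ell$-group. (b) If $\{m_i\}_{i\in I}$ is a nonempty family in $\mathcal J(E)$ bounded above in $\mathcal J(E)$ and $d(x):=\sup_i m_i(x)$ for $x\in E$, then for every $x\in E$ $$\Big(\bigvee_i m_i\Big)(x)=\sup\{d(x_1)+\cdots+d(x_n):\ x=x_1+\cdots+x_n,\ x_1,\dots,x_n\in E,\ n\ge1\}.$$ (c) If $\{m_i\}_{i\in I}$ is a nonempty family in $\mathcal J(E)$ bounded below in $\mathcal J(E)$ and $e(x):=\inf_i m_i(x)$ for $x\in E$, then for every $x\in E$ $$\Big(\bigwedge_i m_i\Big)(x)=\inf\{e(x_1)+\cdots+e(x_n):\ x=x_1+\cdots+x_n,\ x_1,\dots,x_n\in E,\ n\ge1\}.$$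
   Context: Pseudo effect algebra: partial algebra $(E;+,0,1)$ such that for all $a,b,c$: (i) $a+b$ and $(a+b)+c$ exist iff $b+c$ and $a+(b+c)$ exist, and then they are equal; (ii) there is exactly one $d$ and one $e$ with $a+d=e+a=1$; (iii) if $a+b$ exists there are $d,e$ with $a+b=d+a=b+e$; (iv) if $1+a$ or $a+1$ exists then $a=0$. (RDP): whenever $a_1+a_2=b_1+b_2$ there are $d_1,\dots,d_4$ with $d_1+d_2=a_1$, $d_3+d_4=a_2$, $d_1+d_3=b_1$, $d_2+d_4=b_2$. A signed measure is $m:E\to\mathbb R$ with $m(a+b)=m(a)+m(b)$ whenever $a+b$ is defined; a measure is a nonnegative signed measure; $m_1\le^+m_2$ iff $m_2-m_1$ is a measure. $\mathcal J(E)$ is the set of Jordan signed measures, i.e. signed measures that are differences of two measures, with pointwise addition. Dedekind complete: every nonempty subset bounded above has a supremum (and bounded below has an infimum). *)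

From Stdlib Require Import Reals List.
Import ListNotations.
Open Scope R_scope.

Section PEA.
Context {E : Type} (plus : E -> E -> option E) (zero one : E).

Definition padd (oa ob : option E) : option E :=
  match oa, ob with Some a, Some b => plus a b | _, _ => None end.

(* Pseudo effect algebra axioms (i)-(iv). Axiom (i) says: a+b and (a+b)+c exist
   iff b+c and a+(b+c) exist, and then they are equal. *)
Definition is_PEA : Prop :=
  (forall a b c, padd (plus a b) (Some c) = padd (Some a) (plus b c)) /\
  (forall a, (exists! d, plus a d = Some one) /\ (exists! e, plus e a = Some one)) /\
  (forall a b s, plus a b = Some s ->
     exists d e, plus d a = Some s /\ plus b e = Some s) /\
  (forall a, ((exists s, plus one a = Some s) \/ (exists s, plus a one = Some s)) ->
     a = zero).

Definition RDP : Prop :=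
  forall a1 a2 b1 b2 s, plus a1 a2 = Some s -> plus b1 b2 = Some s ->
    exists d1 d2 d3 d4,
      plus d1 d2 = Some a1 /\ plus d3 d4 = Some a2 /\
      plus d1 d3 = Some b1 /\ plus d2 d4 = Some b2.

(* x1 + (x2 + (... + xn)) as a partial sum (by (i) any bracketing agrees) *)
Fixpoint psum (l : list E) : option E :=
  match l with
  | [] => Some zero
  | [a] => Some a
  | a :: l' => padd (Some a) (psum l')
  end.

Definition signed_measure (m : E -> R) : Prop :=
  forall a b s, plus a b = Some s -> m s = m a + m b.

Definition measure (m : E -> R) : Prop :=
  signed_measure m /\ forall a, 0 <= m a.

Definition le_plus (m1 m2 : E -> R) : Prop := measure (fun x => m2 x - m1 x).

Definition Jordan (m : E -> R) : Prop :=
  exists m1 m2, measure m1 /\ measure m2 /\ forall x, m x = m1 x - m2 x.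

Definition is_sup_J (S : (E -> R) -> Prop) (s : E -> R) : Prop :=
  Jordan s /\ (forall m, S m -> le_plus m s) /\
  (forall u, Jordan u -> (forall m, S m -> le_plus m u) -> le_plus s u).

Definition is_inf_J (S : (E -> R) -> Prop) (s : E -> R) : Prop :=
  Jordan s /\ (forall m, S m -> le_plus s m) /\
  (forall u, Jordan u -> (forall m, S m -> le_plus u m) -> le_plus u s).

Definition abelian_Dedekind_complete_lgroup : Prop :=
  (* subgroup of (E -> R) under pointwise addition (hence Abelian) *)
  Jordan (fun _ => 0) /\
  (forall m, Jordan m -> Jordan (fun x => - m x)) /\
  (forall m1 m2, Jordan m1 -> Jordan m2 -> Jordan (fun x => m1 x + m2 x)) /\
  (forall m, Jordan m -> le_plus m m) /\
  (forall m1 m2 m3, Jordan m1 -> Jordan m2 -> Jordan m3 ->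
     le_plus m1 m2 -> le_plus m2 m3 -> le_plus m1 m3) /\
  (forall m1 m2, Jordan m1 -> Jordan m2 ->
     le_plus m1 m2 -> le_plus m2 m1 -> forall x, m1 x = m2 x) /\
  (forall m1 m2 m, Jordan m1 -> Jordan m2 -> Jordan m -> le_plus m1 m2 ->
     le_plus (fun x => m1 x + m x) (fun x => m2 x + m x)) /\
  (forall m1 m2, Jordan m1 -> Jordan m2 ->
     (exists s, is_sup_J (fun f => f = m1 \/ f = m2) s) /\
     (exists t, is_inf_J (fun f => f = m1 \/ f = m2) t)) /\
  (forall S : (E -> R) -> Prop, (forall m, S m -> Jordan m) -> (exists m, S m) ->
     (exists u, Jordan u /\ forall m, S m -> le_plus m u) ->
     exists s, is_sup_J S s) /\
  (forall S : (E -> R) -> Prop, (forall m, S m -> Jordan m) -> (exists m, S m) ->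
     (exists u, Jordan u /\ forall m, S m -> le_plus u m) ->
     exists t, is_inf_J S t).

End PEA.

Definition is_lower_bound (P : R -> Prop) (m : R) : Prop := forall x, P x -> m <= x.
Definition is_glb (P : R -> Prop) (m : R) : Prop :=
  is_lower_bound P m /\ forall b, is_lower_bound P b -> b <= m.

From Stdlib Require Import Reals List Lra.
Import ListNotations.
Open Scope R_scope.

(* For a family {m_i} bounded above, d := sup_i m_i is subadditive, and
   its hull D(x) := sup { d(x_1) + ... + d(x_n) | x = x_1 + ... + x_n } is additive:
   superadditivity comes from concatenating decompositions of a and b, subadditivity
   from refining a decomposition of a + b by (RDP) into decompositions of a and b.
   Every signed measure above d lies above D, and D - m_i is a measure, so D is the
   supremum of {m_i} in J(E).  Infima are suprema of the negated family. *)

Lemma lub_fun_exists {A : Type} (P : A -> R -> Prop) (u : A -> R) :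
  (forall x r, P x r -> r <= u x) -> (forall x, exists r, P x r) ->
  exists f : A -> R, forall x, is_lub (P x) (f x).
Proof.
  intros Hu Hne.
  assert (Hb : forall x, bound (P x)) by (intro x; exists (u x); exact (Hu x)).
  exists (fun x => proj1_sig (completeness _ (Hb x) (Hne x))).
  intro x; exact (proj2_sig (completeness _ (Hb x) (Hne x))).
Qed.

Lemma is_lub_opp (P Q : R -> Prop) a :
  (forall r, Q r <-> P (- r)) -> is_glb P a -> is_lub Q (- a).
Proof.
  intros HQ [Hlow Hgreat]; split.
  - intros r Hr. apply HQ, Hlow in Hr. lra.
  - intros b Hb.
    assert (Hb' : is_lower_bound P (- b)).
    { intros y Hy. assert (Hy' : Q (- y)) by (apply HQ; rewrite Ropp_involutive; exact Hy).
      specialize (Hb _ Hy'). lra. }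
    specialize (Hgreat _ Hb'). lra.
Qed.

Lemma is_glb_opp (P Q : R -> Prop) a :
  (forall r, P r <-> Q (- r)) -> is_lub Q a -> is_glb P (- a).
Proof.
  intros HP [Hup Hleast]; split.
  - intros r Hr. apply HP, Hup in Hr. lra.
  - intros b Hb.
    assert (Hb' : is_upper_bound Q (- b)).
    { intros y Hy. assert (Hy' : P (- y)) by (apply HP; rewrite Ropp_involutive; exact Hy).
      specialize (Hb _ Hy'). lra. }
    specialize (Hleast _ Hb'). lra.
Qed.

Section ListSums.
Context {E : Type}.

Definition lsum (f : E -> R) (l : list E) : R := fold_right Rplus 0 (map f l).

Lemma lsum_app f l1 l2 : lsum f (l1 ++ l2) = lsum f l1 + lsum f l2.
Proof. induction l1 as [|a l1 IH]; unfold lsum in *; simpl; [ring| rewrite IH; ring]. Qed.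

Lemma lsum_le f g l : (forall y, f y <= g y) -> lsum f l <= lsum g l.
Proof.
  intro Hfg; induction l as [|a l IH]; unfold lsum in *; simpl; [lra|].
  specialize (Hfg a); lra.
Qed.

Lemma lsum_opp f l : lsum (fun y => - f y) l = - lsum f l.
Proof. induction l as [|a l IH]; unfold lsum in *; simpl; [ring| rewrite IH; ring]. Qed.

End ListSums.

Section JordanMeasures.
Context {E : Type} (plus : E -> E -> option E) (zero : E).
Hypothesis plusA :
  forall a b c, padd plus (plus a b) (Some c) = padd plus (Some a) (plus b c).
Hypothesis rdp : RDP plus.

Definition subadditive (g : E -> R) : Prop :=
  forall y z w, plus y z = Some w -> g w <= g y + g z.

Definition decomp_sums (d : E -> R) (x : E) (r : R) : Prop :=
  exists l, l <> [] /\ psum plus zero l = Some x /\ r = lsum d l.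

Lemma psum_cons (a : E) l :
  l <> [] -> psum plus zero (a :: l) = padd plus (Some a) (psum plus zero l).
Proof. destruct l; [congruence| reflexivity]. Qed.

Lemma psum_app l1 l2 a b s :
  l1 <> [] -> l2 <> [] -> psum plus zero l1 = Some a -> psum plus zero l2 = Some b ->
  plus a b = Some s -> psum plus zero (l1 ++ l2) = Some s.
Proof.
  revert a s; induction l1 as [|x l1 IH]; intros a s Hl1 Hl2 Ha Hb Hab; [congruence|].
  destruct l1 as [|y l1'].
  - injection Ha as <-. change ([x] ++ l2) with (x :: l2).
    rewrite psum_cons, Hb by exact Hl2. exact Hab.
  - rewrite psum_cons in Ha by congruence.
    destruct (psum plus zero (y :: l1')) as [a'|] eqn:Ha'; [|discriminate]. simpl in Ha.
    assert (Hassoc := plusA x a' b). rewrite Ha in Hassoc. simpl in Hassoc.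
    rewrite Hab in Hassoc.
    destruct (plus a' b) as [c|] eqn:Hc; [|discriminate]. simpl in Hassoc.
    change ((x :: y :: l1') ++ l2) with (x :: ((y :: l1') ++ l2)).
    rewrite psum_cons by (simpl; congruence).
    rewrite (IH a' c) by (congruence || assumption). exact (eq_sym Hassoc).
Qed.

Lemma signed_measure_psum m l x :
  signed_measure plus m -> l <> [] -> psum plus zero l = Some x -> m x = lsum m l.
Proof.
  intro Hm; revert x; induction l as [|a l IH]; intros x Hne Hl; [congruence|].
  destruct l as [|b l'].
  - injection Hl as <-. unfold lsum; simpl; ring.
  - rewrite psum_cons in Hl by congruence.
    destruct (psum plus zero (b :: l')) as [y|] eqn:Hy; [|discriminate]. simpl in Hl.
    rewrite (Hm _ _ _ Hl), (IH y) by (congruence || assumption).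
    unfold lsum; simpl; ring.
Qed.

(* The refinement pairs up with [l]: the i-th summand of [l] is the sum of the
   i-th summands of the decompositions of [a] and of [b]. *)
Lemma psum_refine l x a b :
  l <> [] -> psum plus zero l = Some x -> plus a b = Some x ->
  exists lt : list (E * E),
    map (fun p => plus (fst p) (snd p)) lt = map Some l /\
    psum plus zero (map fst lt) = Some a /\ psum plus zero (map snd lt) = Some b.
Proof.
  revert x a b; induction l as [|x0 l IH]; intros x a b Hne Hl Hab; [congruence|].
  destruct l as [|y0 l'].
  - injection Hl as <-. exists [(a, b)]. simpl. rewrite Hab. auto.
  - rewrite psum_cons in Hl by congruence.
    destruct (psum plus zero (y0 :: l')) as [r|] eqn:Hr; [|discriminate]. simpl in Hl.
    destruct (rdp a b x0 r x Hab Hl) as (d1 & d2 & d3 & d4 & H12 & H34 & H13 & H24).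
    destruct (IH r d2 d4 ltac:(congruence) eq_refl H24) as (lt & Hlt & Hfst & Hsnd).
    destruct lt as [|p lt]; [discriminate Hlt|].
    exists ((d1, d3) :: p :: lt). split; [|split].
    + change (plus d1 d3 :: map (fun p => plus (fst p) (snd p)) (p :: lt)
              = Some x0 :: map Some (y0 :: l')).
      rewrite H13, Hlt. reflexivity.
    + change (psum plus zero (d1 :: map fst (p :: lt)) = Some a).
      rewrite psum_cons, Hfst by discriminate. exact H12.
    + change (psum plus zero (d3 :: map snd (p :: lt)) = Some b).
      rewrite psum_cons, Hsnd by discriminate. exact H34.
Qed.

Lemma lsum_refine_le g lt l :
  subadditive g -> map (fun p => plus (fst p) (snd p)) lt = map Some l ->
  lsum g l <= lsum g (map fst lt) + lsum g (map snd lt).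
Proof.
  intro Hg; revert l; induction lt as [|[y z] lt IH]; intros [|w l] Hlt;
    simpl in Hlt; try discriminate.
  - unfold lsum; simpl; lra.
  - injection Hlt as Hw Hlt. specialize (Hg _ _ _ Hw). specialize (IH l Hlt).
    unfold lsum in *; simpl. lra.
Qed.

Lemma decomp_sums_single d x : decomp_sums d x (d x).
Proof. exists [x]. repeat split; [discriminate| unfold lsum; simpl; ring]. Qed.

Lemma decomp_sums_le d u x r :
  signed_measure plus u -> (forall y, d y <= u y) -> decomp_sums d x r -> r <= u x.
Proof.
  intros Hu Hdu (l & Hne & Hl & ->).
  rewrite (signed_measure_psum u l x Hu Hne Hl). exact (lsum_le d u l Hdu).
Qed.

Lemma hull_exists d u :
  signed_measure plus u -> (forall y, d y <= u y) ->
  exists D, forall x, is_lub (decomp_sums d x) (D x).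
Proof.
  intros Hu Hdu. apply (lub_fun_exists _ u).
  - intros x r. exact (decomp_sums_le d u x r Hu Hdu).
  - intro x. exists (d x). apply decomp_sums_single.
Qed.

Section Hull.
Variables d D : E -> R.
Hypothesis hull : forall x, is_lub (decomp_sums d x) (D x).

Lemma le_hull x : d x <= D x.
Proof. apply (proj1 (hull x)), decomp_sums_single. Qed.

Lemma hull_le u : signed_measure plus u -> (forall y, d y <= u y) -> forall x, D x <= u x.
Proof. intros Hu Hdu x. apply (proj2 (hull x)). exact (fun r => decomp_sums_le d u x r Hu Hdu). Qed.

Lemma decomp_le_hull x l : l <> [] -> psum plus zero l = Some x -> lsum d l <= D x.
Proof. intros Hne Hl. apply (proj1 (hull x)). exists l. auto. Qed.

Lemma hull_subadditive : subadditive d -> subadditive D.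
Proof.
  intros Hd a b s Hab. apply (proj2 (hull s)). intros r (l & Hne & Hl & ->).
  destruct (psum_refine l s a b Hne Hl Hab) as (lt & Hlt & Ha & Hb).
  assert (Hlt0 : lt <> []).
  { intros ->. apply Hne, (map_eq_nil Some). symmetry. exact Hlt. }
  assert (Hfst : map fst lt <> []) by (intro H; apply Hlt0, map_eq_nil with (1 := H)).
  assert (Hsnd : map snd lt <> []) by (intro H; apply Hlt0, map_eq_nil with (1 := H)).
  pose proof (lsum_refine_le d lt l Hd Hlt).
  pose proof (decomp_le_hull a _ Hfst Ha). pose proof (decomp_le_hull b _ Hsnd Hb).
  lra.
Qed.

Lemma hull_superadditive a b s : plus a b = Some s -> D a + D b <= D s.
Proof.
  intro Hab.
  assert (Hdecomp_a : forall la, la <> [] -> psum plus zero la = Some a ->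
                                 lsum d la + D b <= D s).
  { intros la Hla Ha. cut (D b <= D s - lsum d la); [lra|].
    apply (proj2 (hull b)). intros r (lb & Hlb & Hb & ->).
    assert (Hne : la ++ lb <> []) by (destruct la; [congruence| discriminate]).
    pose proof (decomp_le_hull s _ Hne (psum_app la lb a b s Hla Hlb Ha Hb Hab)) as Hs.
    rewrite lsum_app in Hs. lra. }
  cut (D a <= D s - D b); [lra|].
  apply (proj2 (hull a)). intros r (la & Hla & Ha & ->).
  specialize (Hdecomp_a la Hla Ha). lra.
Qed.

Lemma hull_signed_measure : subadditive d -> signed_measure plus D.
Proof.
  intros Hd a b s Hab.
  pose proof (hull_subadditive Hd a b s Hab). pose proof (hull_superadditive a b s Hab).
  lra.
Qed.

End Hull.

Lemma measure_ext (f g : E -> R) :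
  (forall x, f x = g x) -> measure plus f -> measure plus g.
Proof.
  intros Hfg [Hf Hnn]; split.
  - intros a b s H. rewrite <- !Hfg. exact (Hf a b s H).
  - intro a. rewrite <- Hfg. exact (Hnn a).
Qed.

Lemma measure_zero : measure plus (fun _ => 0).
Proof. split; [intros a b s _; ring| intros _; lra]. Qed.

Lemma measure_add (f g : E -> R) :
  measure plus f -> measure plus g -> measure plus (fun x => f x + g x).
Proof.
  intros [Hf Nf] [Hg Ng]; split.
  - intros a b s H. rewrite (Hf _ _ _ H), (Hg _ _ _ H). ring.
  - intro a. specialize (Nf a); specialize (Ng a); lra.
Qed.

Lemma le_plus_le (f g : E -> R) x : le_plus plus f g -> f x <= g x.
Proof. intros [_ Hnn]. specialize (Hnn x). simpl in Hnn. lra. Qed.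

Lemma le_plus_intro (f g : E -> R) :
  signed_measure plus f -> signed_measure plus g -> (forall x, f x <= g x) -> le_plus plus f g.
Proof.
  intros Hf Hg Hfg; split.
  - intros a b s H. rewrite (Hf _ _ _ H), (Hg _ _ _ H). ring.
  - intro a. specialize (Hfg a). lra.
Qed.

Lemma le_plus_refl (f : E -> R) : le_plus plus f f.
Proof. apply measure_ext with (2 := measure_zero). intro; ring. Qed.

Lemma le_plus_trans (f g h : E -> R) : le_plus plus f g -> le_plus plus g h -> le_plus plus f h.
Proof. intros Hfg Hgh. apply measure_ext with (2 := measure_add _ _ Hfg Hgh). intro; ring. Qed.

Lemma le_plus_antisym (f g : E -> R) :
  le_plus plus f g -> le_plus plus g f -> forall x, f x = g x.
Proof.
  intros Hfg Hgf x. pose proof (le_plus_le f g x Hfg). pose proof (le_plus_le g f x Hgf). lra.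
Qed.

Lemma le_plus_add (f g h : E -> R) :
  le_plus plus f g -> le_plus plus (fun x => f x + h x) (fun x => g x + h x).
Proof. apply measure_ext. intro; ring. Qed.

Lemma le_plus_opp (f g : E -> R) :
  le_plus plus f g -> le_plus plus (fun x => - g x) (fun x => - f x).
Proof. apply measure_ext. intro; ring. Qed.

Lemma le_plus_opp_l (f g : E -> R) :
  le_plus plus (fun x => - f x) g -> le_plus plus (fun x => - g x) f.
Proof. apply measure_ext. intro; ring. Qed.

Lemma le_plus_opp_r (f g : E -> R) :
  le_plus plus f (fun x => - g x) -> le_plus plus g (fun x => - f x).
Proof. apply measure_ext. intro; ring. Qed.

Lemma Jordan_signed_measure (m : E -> R) : Jordan plus m -> signed_measure plus m.
Proof.
  intros (p & q & [Hp _] & [Hq _] & Hpq) a b s H.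
  rewrite !Hpq, (Hp _ _ _ H), (Hq _ _ _ H). ring.
Qed.

Lemma measure_Jordan (p : E -> R) : measure plus p -> Jordan plus p.
Proof. intro Hp. exists p, (fun _ => 0). split; [exact Hp| split; [exact measure_zero| intro; ring]]. Qed.

Lemma Jordan_zero : Jordan plus (fun _ => 0).
Proof. exact (measure_Jordan _ measure_zero). Qed.

Lemma Jordan_opp (m : E -> R) : Jordan plus m -> Jordan plus (fun x => - m x).
Proof.
  intros (p & q & Hp & Hq & Hpq). exists q, p.
  split; [exact Hq| split; [exact Hp| intro x; rewrite Hpq; ring]].
Qed.

Lemma Jordan_add (m1 m2 : E -> R) :
  Jordan plus m1 -> Jordan plus m2 -> Jordan plus (fun x => m1 x + m2 x).
Proof.
  intros (p1 & q1 & Hp1 & Hq1 & E1) (p2 & q2 & Hp2 & Hq2 & E2).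
  exists (fun x => p1 x + p2 x), (fun x => q1 x + q2 x).
  split; [apply measure_add; assumption|].
  split; [apply measure_add; assumption| intro x; rewrite E1, E2; ring].
Qed.

(* If [m = p - q], then [v = (v - m + p) - q]. *)
Lemma Jordan_of_ge (m v : E -> R) :
  Jordan plus m -> signed_measure plus v -> (forall x, m x <= v x) -> Jordan plus v.
Proof.
  intros (p & q & [Hp Np] & Hq & Hpq) Hv Hmv.
  exists (fun x => v x - m x + p x), q. split; [|split; [exact Hq| intro x; rewrite Hpq; ring]].
  split.
  - intros a b s H. rewrite !Hpq, (Hv _ _ _ H), (Hp _ _ _ H), (proj1 Hq _ _ _ H). ring.
  - intro a. specialize (Hmv a); specialize (Np a); lra.
Qed.

Lemma Jordan_pair_upper_bound (m1 m2 : E -> R) :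
  Jordan plus m1 -> Jordan plus m2 ->
  exists u, Jordan plus u /\ le_plus plus m1 u /\ le_plus plus m2 u.
Proof.
  intros J1 J2.
  destruct J1 as (p1 & q1 & Hp1 & Hq1 & E1), J2 as (p2 & q2 & Hp2 & Hq2 & E2).
  exists (fun x => p1 x + p2 x).
  split; [apply measure_Jordan, measure_add; assumption|].
  split.
  - apply measure_ext with (2 := measure_add _ _ Hq1 Hp2). intro x; rewrite E1; ring.
  - apply measure_ext with (2 := measure_add _ _ Hq2 Hp1). intro x; rewrite E2; ring.
Qed.

Definition family_set {I : Type} (m : I -> E -> R) (f : E -> R) : Prop := exists i, f = m i.

Definition values_at {I : Type} (m : I -> E -> R) (x : E) (r : R) : Prop := exists i, r = m i x.

Lemma values_lub_subadditive {I : Type} (m : I -> E -> R) d :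
  (forall i, signed_measure plus (m i)) -> (forall x, is_lub (values_at m x) (d x)) ->
  subadditive d.
Proof.
  intros Hm Hd y z w H. apply (proj2 (Hd w)). intros r [i ->].
  rewrite (Hm i _ _ _ H).
  pose proof (proj1 (Hd y) (m i y) (ex_intro _ i eq_refl)).
  pose proof (proj1 (Hd z) (m i z) (ex_intro _ i eq_refl)).
  lra.
Qed.

Lemma values_lub_le {I : Type} (m : I -> E -> R) d u x :
  (forall i, le_plus plus (m i) u) -> is_lub (values_at m x) (d x) -> d x <= u x.
Proof. intros Hmu Hd. apply (proj2 Hd). intros r [i ->]. exact (le_plus_le _ _ x (Hmu i)). Qed.

Lemma sup_J_hull {I : Type} (m : I -> E -> R) d D :
  inhabited I -> (forall i, Jordan plus (m i)) ->
  (forall x, is_lub (values_at m x) (d x)) -> (forall x, is_lub (decomp_sums d x) (D x)) ->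
  is_sup_J plus (family_set m) D.
Proof.
  intros [i0] Hm Hd HD.
  assert (Hmd : forall i x, m i x <= D x).
  { intros i x. apply Rle_trans with (d x); [|exact (le_hull d D HD x)].
    apply (proj1 (Hd x)). exists i. reflexivity. }
  assert (HDsm : signed_measure plus D).
  { apply (hull_signed_measure d D HD).
    apply values_lub_subadditive with m; [intro i; apply Jordan_signed_measure, Hm| exact Hd]. }
  split; [|split].
  - exact (Jordan_of_ge (m i0) D (Hm i0) HDsm (Hmd i0)).
  - intros f [i ->]. apply le_plus_intro; [apply Jordan_signed_measure, Hm| exact HDsm| exact (Hmd i)].
  - intros u Hu Hub.
    apply le_plus_intro; [exact HDsm| apply Jordan_signed_measure, Hu|].
    apply (hull_le d D HD u (Jordan_signed_measure u Hu)). intro x.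
    apply (values_lub_le m d u x); [|exact (Hd x)].
    intro i. apply Hub. exists i. reflexivity.
Qed.

Lemma is_sup_J_unique (S : (E -> R) -> Prop) s1 s2 :
  is_sup_J plus S s1 -> is_sup_J plus S s2 -> forall x, s1 x = s2 x.
Proof.
  intros (J1 & U1 & L1) (J2 & U2 & L2).
  exact (le_plus_antisym s1 s2 (L1 s2 J2 U2) (L2 s1 J1 U1)).
Qed.

Lemma sup_J_exists {I : Type} (m : I -> E -> R) :
  inhabited I -> (forall i, Jordan plus (m i)) ->
  (exists u, Jordan plus u /\ forall i, le_plus plus (m i) u) ->
  exists s, is_sup_J plus (family_set m) s.
Proof.
  intros Hinh Hm (u & Hu & Hub).
  destruct (lub_fun_exists (values_at m) u) as [d Hd].
  - intros x r [i ->]. exact (le_plus_le _ _ x (Hub i)).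
  - intro x. destruct Hinh as [i0]. exists (m i0 x), i0. reflexivity.
  - destruct (hull_exists d u) as [D HD].
    + exact (Jordan_signed_measure u Hu).
    + intro x. exact (values_lub_le m d u x Hub (Hd x)).
    + exists D. exact (sup_J_hull m d D Hinh Hm Hd HD).
Qed.

Lemma sup_J_decomp_sums (I : Type) (m : I -> E -> R) :
  inhabited I -> (forall i, Jordan plus (m i)) ->
  (exists u, Jordan plus u /\ forall i, le_plus plus (m i) u) ->
  forall d, (forall x, is_lub (values_at m x) (d x)) ->
  forall s, is_sup_J plus (family_set m) s ->
  forall x, is_lub (decomp_sums d x) (s x).
Proof.
  intros Hinh Hm (u & Hu & Hub) d Hd s Hs x.
  destruct (hull_exists d u) as [D HD].
  - exact (Jordan_signed_measure u Hu).
  - intro y. exact (values_lub_le m d u y Hub (Hd y)).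
  - rewrite (is_sup_J_unique _ s D Hs (sup_J_hull m d D Hinh Hm Hd HD) x). exact (HD x).
Qed.

Lemma inf_J_of_sup_opp {I : Type} (m : I -> E -> R) s :
  is_sup_J plus (family_set (fun i x => - m i x)) s ->
  is_inf_J plus (family_set m) (fun x => - s x).
Proof.
  intros (Js & Us & Ls). split; [apply Jordan_opp, Js| split].
  - intros f [i ->]. apply le_plus_opp_l, Us. exists i. reflexivity.
  - intros u Hu Hlow. apply le_plus_opp_r, Ls; [apply Jordan_opp, Hu|].
    intros f [i ->]. apply le_plus_opp, Hlow. exists i. reflexivity.
Qed.

Lemma sup_J_opp_of_inf {I : Type} (m : I -> E -> R) t :
  is_inf_J plus (family_set m) t ->
  is_sup_J plus (family_set (fun i x => - m i x)) (fun x => - t x).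
Proof.
  intros (Jt & Lt & Gt). split; [apply Jordan_opp, Jt| split].
  - intros f [i ->]. apply le_plus_opp, Lt. exists i. reflexivity.
  - intros u Hu Hup. apply le_plus_opp_l, Gt; [apply Jordan_opp, Hu|].
    intros f [i ->]. apply le_plus_opp_l, Hup. exists i. reflexivity.
Qed.

Lemma inf_J_exists {I : Type} (m : I -> E -> R) :
  inhabited I -> (forall i, Jordan plus (m i)) ->
  (exists u, Jordan plus u /\ forall i, le_plus plus u (m i)) ->
  exists t, is_inf_J plus (family_set m) t.
Proof.
  intros Hinh Hm (u & Hu & Hlow).
  destruct (sup_J_exists (fun i x => - m i x)) as [s Hs].
  - exact Hinh.
  - intro i. apply Jordan_opp, Hm.
  - exists (fun x => - u x). split; [apply Jordan_opp, Hu| intro i; apply le_plus_opp, Hlow].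
  - exists (fun x => - s x). exact (inf_J_of_sup_opp m s Hs).
Qed.

Lemma inf_J_decomp_sums (I : Type) (m : I -> E -> R) :
  inhabited I -> (forall i, Jordan plus (m i)) ->
  (exists u, Jordan plus u /\ forall i, le_plus plus u (m i)) ->
  forall e, (forall x, is_glb (values_at m x) (e x)) ->
  forall t, is_inf_J plus (family_set m) t ->
  forall x, is_glb (decomp_sums e x) (t x).
Proof.
  intros Hinh Hm (u & Hu & Hlow) e He t Ht x.
  assert (Hsup : is_lub (decomp_sums (fun y => - e y) x) (- t x)).
  { refine (sup_J_decomp_sums I (fun i y => - m i y) Hinh _ _
              (fun y => - e y) _ (fun y => - t y) _ x).
    - intro i. apply Jordan_opp, Hm.
    - exists (fun y => - u y). split; [apply Jordan_opp, Hu| intro i; apply le_plus_opp, Hlow].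
    - intro y. apply is_lub_opp with (2 := He y).
      intro r. split; intros [i Hi]; exists i; lra.
    - exact (sup_J_opp_of_inf m t Ht). }
  rewrite <- (Ropp_involutive (t x)). apply is_glb_opp with (2 := Hsup).
  intro r. split; intros (l & Hne & Hl & Hr); exists l; rewrite lsum_opp in *;
    repeat split; auto; lra.
Qed.

Lemma family_set_sig (S : (E -> R) -> Prop) f :
  family_set (@proj1_sig _ S) f <-> S f.
Proof.
  split; [intros [[g Hg] ->]; exact Hg|].
  intro Hf. exists (exist _ f Hf). reflexivity.
Qed.

Lemma is_sup_J_ext (S S' : (E -> R) -> Prop) s :
  (forall f, S f <-> S' f) -> is_sup_J plus S s -> is_sup_J plus S' s.
Proof.
  intros HS (Js & Us & Ls). split; [exact Js| split].
  - intros f Hf. apply Us, HS, Hf.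
  - intros u Hu Hup. apply Ls; [exact Hu| intros f Hf; apply Hup, HS, Hf].
Qed.

Lemma is_inf_J_ext (S S' : (E -> R) -> Prop) t :
  (forall f, S f <-> S' f) -> is_inf_J plus S t -> is_inf_J plus S' t.
Proof.
  intros HS (Jt & Lt & Gt). split; [exact Jt| split].
  - intros f Hf. apply Lt, HS, Hf.
  - intros u Hu Hlow. apply Gt; [exact Hu| intros f Hf; apply Hlow, HS, Hf].
Qed.

Lemma sup_J_exists_set (S : (E -> R) -> Prop) :
  (forall f, S f -> Jordan plus f) -> (exists f, S f) ->
  (exists u, Jordan plus u /\ forall f, S f -> le_plus plus f u) ->
  exists s, is_sup_J plus S s.
Proof.
  intros HS [f0 Hf0] (u & Hu & Hup).
  destruct (sup_J_exists (@proj1_sig _ S)) as [s Hs].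
  - exact (inhabits (exist _ f0 Hf0)).
  - intros [f Hf]. exact (HS f Hf).
  - exists u. split; [exact Hu| intros [f Hf]; exact (Hup f Hf)].
  - exists s. exact (is_sup_J_ext _ S s (family_set_sig S) Hs).
Qed.

Lemma inf_J_exists_set (S : (E -> R) -> Prop) :
  (forall f, S f -> Jordan plus f) -> (exists f, S f) ->
  (exists u, Jordan plus u /\ forall f, S f -> le_plus plus u f) ->
  exists t, is_inf_J plus S t.
Proof.
  intros HS [f0 Hf0] (u & Hu & Hlow).
  destruct (inf_J_exists (@proj1_sig _ S)) as [t Ht].
  - exact (inhabits (exist _ f0 Hf0)).
  - intros [f Hf]. exact (HS f Hf).
  - exists u. split; [exact Hu| intros [f Hf]; exact (Hlow f Hf)].
  - exists t. exact (is_inf_J_ext _ S t (family_set_sig S) Ht).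
Qed.

Lemma Jordan_abelian_Dedekind_complete_lgroup : abelian_Dedekind_complete_lgroup plus.
Proof.
  split; [exact Jordan_zero|].
  split; [exact Jordan_opp|].
  split; [exact Jordan_add|].
  split; [intros m _; apply le_plus_refl|].
  split; [intros m1 m2 m3 _ _ _; apply le_plus_trans|].
  split; [intros m1 m2 _ _; apply le_plus_antisym|].
  split; [intros m1 m2 m _ _ _; apply le_plus_add|].
  split; [|split; [exact sup_J_exists_set| exact inf_J_exists_set]].
  intros m1 m2 J1 J2.
  assert (HS : forall f, f = m1 \/ f = m2 -> Jordan plus f) by (intros f [-> | ->]; assumption).
  assert (Hne : exists f, f = m1 \/ f = m2) by (exists m1; left; reflexivity).
  split.
  - apply sup_J_exists_set; [exact HS| exact Hne|].
    destruct (Jordan_pair_upper_bound m1 m2 J1 J2) as (u & Hu & H1 & H2).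
    exists u. split; [exact Hu| intros f [-> | ->]; assumption].
  - apply inf_J_exists_set; [exact HS| exact Hne|].
    destruct (Jordan_pair_upper_bound (fun x => - m1 x) (fun x => - m2 x)
                (Jordan_opp m1 J1) (Jordan_opp m2 J2)) as (u & Hu & H1 & H2).
    exists (fun x => - u x).
    split; [apply Jordan_opp, Hu| intros f [-> | ->]; apply le_plus_opp_l; assumption].
Qed.

End JordanMeasures.

Theorem theorem3p5 (E : Type) (plus : E -> E -> option E) (zero one : E)
  (HE : is_PEA plus zero one) (HR : RDP plus) :
  (* (a) *)
  abelian_Dedekind_complete_lgroup plus /\
  (* (b) *)
  (forall (I : Type) (m : I -> E -> R), inhabited I ->
     (forall i, Jordan plus (m i)) ->
     (exists u, Jordan plus u /\ forall i, le_plus plus (m i) u) ->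
     forall d : E -> R, (forall x, is_lub (fun r => exists i, r = m i x) (d x)) ->
     forall s, is_sup_J plus (fun f => exists i, f = m i) s ->
     forall x, is_lub (fun r => exists l : list E, l <> [] /\
                         psum plus zero l = Some x /\
                         r = fold_right Rplus 0 (map d l)) (s x)) /\
  (* (c) *)
  (forall (I : Type) (m : I -> E -> R), inhabited I ->
     (forall i, Jordan plus (m i)) ->
     (exists u, Jordan plus u /\ forall i, le_plus plus u (m i)) ->
     forall e : E -> R, (forall x, is_glb (fun r => exists i, r = m i x) (e x)) ->
     forall t, is_inf_J plus (fun f => exists i, f = m i) t ->
     forall x, is_glb (fun r => exists l : list E, l <> [] /\
                         psum plus zero l = Some x /\
                         r = fold_right Rplus 0 (map e l)) (t x)).
Proof.
  destruct HE as [plusA _].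
  split; [|split].
  - exact (Jordan_abelian_Dedekind_complete_lgroup plus zero plusA HR).
  - exact (sup_J_decomp_sums plus zero plusA HR).
  - exact (inf_J_decomp_sums plus zero plusA HR).
Qed.
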